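(* For parameters $0\le b\le1$ and $0\le c\le1$ with $bc\neq1$, let $\mathcal{N}_{b,c}$ be the qubit channel $\mathcal{N}_{b,c}(O)=K_0OK_0^\dagger+K_1OK_1^\dagger$ with (in the standard basis) $$K_0=\begin{pmatrix}\sqrt{\frac{(1+b)(1+c)}{2(1+bc)}}&0\\0&\sqrt{\frac{(1-b)(1+c)}{2(1-bc)}}\end{pmatrix},\qquad K_1=\begin{pmatrix}0&\sqrt{\frac{(1+b)(1-c)}{2(1-bc)}}\\\sqrt{\frac{(1-b)(1-c)}{2(1+bc)}}&0\end{pmatrix}.$$ If $0\le c'\le c\le1$ and $bc\neq1$, then there exists a qubit quantum channel $\mathcal{M}$ such that $\mathcal{N}_{b,c'}=\mathcal{N}_{b,c}\circ\mathcal{M}$.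
   Context: A qubit quantum channel is a completely positive trace-preserving linear map from $\mathcal{L}(\mathbb{C}^2)$ to $\mathcal{L}(\mathbb{C}^2)$. *)

From HB Require Import structures.
From mathcomp Require Import all_boot all_order all_algebra.
From mathcomp Require Import reals.
From mathcomp Require Import complex.
Set Implicit Arguments. Unset Strict Implicit. Unset Printing Implicit Defensive.
Import Order.TTheory GRing.Theory Num.Theory.
Local Open Scope ring_scope.

Definition adjmx (R : realType) m n (A : 'M[R[i]]_(m, n)) : 'M[R[i]]_(n, m) :=
  \matrix_(i, j) ((A j i)^*)%C.

(* Positive semidefiniteness of a "matrix" indexed by a finite type I:
   v^* X v is a nonnegative real for every vector v (in the partial order of
   R[i], 0 <= z means z is real and nonnegative). *)
Definition psd (R : realType) (I : finType) (X : I -> I -> R[i]) : Prop :=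
  forall v : I -> R[i], 0 <= \sum_i \sum_j ((v i)^*)%C * X i j * v j.

(* Ampliation id_n (x) Phi acting on n x n block matrices with 2 x 2 blocks,
   indexed by 'I_n * 'I_2. *)
Definition ampl (R : realType) (n : nat) (Phi : 'M[R[i]]_2 -> 'M[R[i]]_2)
  (X : 'I_n * 'I_2 -> 'I_n * 'I_2 -> R[i]) : 'I_n * 'I_2 -> 'I_n * 'I_2 -> R[i] :=
  fun p q => Phi (\matrix_(a, b) X (p.1, a) (q.1, b)) p.2 q.2.

Definition is_linear_map (R : realType) (Phi : 'M[R[i]]_2 -> 'M[R[i]]_2) : Prop :=
  forall (a : R[i]) (A B : 'M[R[i]]_2), Phi (a *: A + B) = a *: Phi A + Phi B.

Definition completely_positive (R : realType) (Phi : 'M[R[i]]_2 -> 'M[R[i]]_2) : Prop :=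
  forall (n : nat) (X : 'I_n * 'I_2 -> 'I_n * 'I_2 -> R[i]),
    psd X -> psd (ampl Phi X).

Definition trace_preserving (R : realType) (Phi : 'M[R[i]]_2 -> 'M[R[i]]_2) : Prop :=
  forall A : 'M[R[i]]_2, \tr (Phi A) = \tr A.

Definition qubit_channel (R : realType) (Phi : 'M[R[i]]_2 -> 'M[R[i]]_2) : Prop :=
  [/\ is_linear_map Phi, completely_positive Phi & trace_preserving Phi].

Definition sqC (R : realType) (x : R) : R[i] := ((Num.sqrt x)%:C)%C.

Definition K0 (R : realType) (b c : R) : 'M[R[i]]_2 :=
  \matrix_(i < 2, j < 2)
    if (i == 0) && (j == 0) then sqC ((1 + b) * (1 + c) / (2 * (1 + b * c)))
    else if (i == 1) && (j == 1) then sqC ((1 - b) * (1 + c) / (2 * (1 - b * c)))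
    else 0.

Definition K1 (R : realType) (b c : R) : 'M[R[i]]_2 :=
  \matrix_(i < 2, j < 2)
    if (i == 0) && (j == 1) then sqC ((1 + b) * (1 - c) / (2 * (1 - b * c)))
    else if (i == 1) && (j == 0) then sqC ((1 - b) * (1 - c) / (2 * (1 + b * c)))
    else 0.

Definition Nch (R : realType) (b c : R) (O : 'M[R[i]]_2) : 'M[R[i]]_2 :=
  K0 b c *m O *m adjmx (K0 b c) + K1 b c *m O *m adjmx (K1 b c).

From HB Require Import structures.
From mathcomp Require Import all_boot all_order all_algebra.
From mathcomp Require Import reals.
From mathcomp Require Import complex.
From mathcomp Require Import ring lra.
Import Order.TTheory GRing.Theory Num.Theory.
Local Open Scope ring_scope.

(* The family is a semigroup in its second parameter: N_{b,cg} = N_{b,c} o N_{bc,g}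
   for 0 <= g <= 1, so M = N_{bc,c'/c} works. Both Kraus operators of N_{b,c} are real,
   one diagonal and one antidiagonal, hence N_{b,c} maps the diagonal entries of O to
   combinations of diagonal entries and the off-diagonal ones to combinations of
   off-diagonal ones. Composing two such maps multiplies their six coefficients, and the
   semigroup law becomes four rational identities between the diagonal weights plus the
   multiplicativity of the off-diagonal damping factor
   sqrt((1 - b^2) / (1 - b^2 c^2)). *)

Set Implicit Arguments.
Unset Strict Implicit.

Section KrausMaps.
Variable R : realType.

Lemma psd_add (I : finType) (X Y : I -> I -> R[i]) :
  psd X -> psd Y -> psd (fun i j => X i j + Y i j).
Proof.
move=> psdX psdY v.
under eq_bigr => i _ do under eq_bigr => j _ do rewrite mulrDr mulrDl.
under eq_bigr => i _ do rewrite big_split.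
by rewrite big_split /=; apply: addr_ge0.
Qed.

Lemma psd_congr (I J : finType) (T : J -> I -> R[i]) (X : I -> I -> R[i]) :
  psd X -> psd (fun p q => \sum_i \sum_j T p i * X i j * ((T q j)^*)%C).
Proof.
move=> psdX v; set w := fun i => \sum_q ((T q i)^*)%C * v q.
suff -> : \sum_p \sum_q ((v p)^*)%C * (\sum_i \sum_j T p i * X i j * ((T q j)^*)%C) * v q
        = \sum_i \sum_j ((w i)^*)%C * X i j * w j by exact: psdX.
rewrite /w; symmetry.
under eq_bigr => i _ do under eq_bigr => j _ do
  rewrite rmorph_sum mulr_suml mulr_suml.
under eq_bigr => i _ do under eq_bigr => j _ do under eq_bigr => p _ do
  rewrite mulr_sumr.
under eq_bigr => i _ do rewrite exchange_big.
rewrite exchange_big.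
under eq_bigr => p _ do under eq_bigr => i _ do rewrite exchange_big.
under eq_bigr => p _ do rewrite exchange_big.
apply: eq_bigr => p _; apply: eq_bigr => q _.
rewrite mulr_sumr mulr_suml; apply: eq_bigr => i _.
rewrite mulr_sumr mulr_suml; apply: eq_bigr => j _.
rewrite rmorphM /= conjcK; ring.
Qed.

Lemma sum_pair_fst {n : nat} (k : 'I_n) (F : 'I_n * 'I_2 -> R[i]) :
  \sum_(i : 'I_n * 'I_2) F i *+ (i.1 == k) = \sum_(a < 2) F (k, a).
Proof.
under eq_bigr => i _ do rewrite mulrb.
transitivity (\sum_(i1 < n) \sum_(a < 2) (if i1 == k then F (i1, a) else 0)).
  by rewrite pair_big; apply: eq_big => // -[].
rewrite (bigD1 k) //= [X in _ + X]big1 ?addr0.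
  by apply: eq_bigr => a _; rewrite eqxx.
by move=> i1 /negbTE ->; rewrite big1.
Qed.

Definition id_kron {n : nat} (K : 'M[R[i]]_2) (p i : 'I_n * 'I_2) : R[i] :=
  K p.2 i.2 *+ (i.1 == p.1).

Lemma ampl_conjmx (n : nat) (K : 'M[R[i]]_2) (X : 'I_n * 'I_2 -> 'I_n * 'I_2 -> R[i]) p q :
  ampl (fun O => K *m O *m adjmx K) X p q =
  \sum_i \sum_j id_kron K p i * X i j * ((id_kron K q j)^*)%C.
Proof.
rewrite /ampl /id_kron !mxE.
under [RHS]eq_bigr => i _ do under eq_bigr => j _ do
  rewrite rmorphMn mulrnAr.
under [RHS]eq_bigr => i _ do rewrite (sum_pair_fst q.1 (fun j => _ * X i j * ((K q.2 j.2)^*)%C)).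
under [RHS]eq_bigr => i _ do under eq_bigr => a _ do rewrite !mulrnAl.
under [RHS]eq_bigr => i _ do rewrite sumrMnl.
rewrite (sum_pair_fst p.1 (fun i => \sum_j K p.2 i.2 * X i (q.1, j) * _)) /=.
rewrite exchange_big; apply: eq_bigr => b _; rewrite !mxE mulr_suml.
by apply: eq_bigr => a _; rewrite !mxE.
Qed.

Lemma cp_conjmx (K : 'M[R[i]]_2) : completely_positive (fun O => K *m O *m adjmx K).
Proof.
move=> n X psdX v.
under eq_bigr => p _ do under eq_bigr => q _ do rewrite ampl_conjmx.
exact: psd_congr psdX v.
Qed.

Lemma cp_add (Phi Psi : 'M[R[i]]_2 -> 'M[R[i]]_2) :
  completely_positive Phi -> completely_positive Psi ->
  completely_positive (fun O => Phi O + Psi O).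
Proof.
move=> cpPhi cpPsi n X psdX v.
under eq_bigr => p _ do under eq_bigr => q _ do rewrite /ampl mxE.
exact: psd_add (cpPhi _ _ psdX) (cpPsi _ _ psdX) v.
Qed.

Lemma linear_conjmx (K : 'M[R[i]]_2) : is_linear_map (fun O => K *m O *m adjmx K).
Proof. by move=> a A B; rewrite mulmxDr mulmxDl -scalemxAr -scalemxAl. Qed.

Lemma linear_add (Phi Psi : 'M[R[i]]_2 -> 'M[R[i]]_2) :
  is_linear_map Phi -> is_linear_map Psi -> is_linear_map (fun O => Phi O + Psi O).
Proof.
by move=> linPhi linPsi a A B; rewrite linPhi linPsi scalerDr addrACA.
Qed.

End KrausMaps.

Section DiagAntidiagKraus.
Variable R : realType.

Definition diag2 (x0 x1 : R) : 'M[R[i]]_2 :=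
  \matrix_(i < 2, j < 2)
    if (i == 0) && (j == 0) then (x0%:C)%C
    else if (i == 1) && (j == 1) then (x1%:C)%C else 0.

Definition antidiag2 (y0 y1 : R) : 'M[R[i]]_2 :=
  \matrix_(i < 2, j < 2)
    if (i == 0) && (j == 1) then (y0%:C)%C
    else if (i == 1) && (j == 0) then (y1%:C)%C else 0.

(* The general map commuting with conjugation by diag(1, -1) and with transposition. *)
Definition zcov_map (p0 p1 q0 q1 r s : R) (O : 'M[R[i]]_2) : 'M[R[i]]_2 :=
  \matrix_(i < 2, j < 2)
    if i == 0 then
      if j == 0 then (p0%:C * O 0 0 + q0%:C * O 1 1)%C
      else (r%:C * O 0 1 + s%:C * O 1 0)%C
    else
      if j == 0 then (r%:C * O 1 0 + s%:C * O 0 1)%C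
      else (p1%:C * O 1 1 + q1%:C * O 0 0)%C.

Lemma adjmx_diag2 (x0 x1 : R) : adjmx (diag2 x0 x1) = diag2 x0 x1.
Proof.
apply/matrixP => i j; rewrite !mxE.
by case: i => [[|[|i]] ?]; case: j => [[|[|j]] ?]; rewrite //= oppr0.
Qed.

Lemma adjmx_antidiag2 (y0 y1 : R) : adjmx (antidiag2 y0 y1) = antidiag2 y1 y0.
Proof.
apply/matrixP => i j; rewrite !mxE.
by case: i => [[|[|i]] ?]; case: j => [[|[|j]] ?]; rewrite //= oppr0.
Qed.

Lemma diag_antidiag_krausE (x0 x1 y0 y1 : R) (O : 'M[R[i]]_2) :
  diag2 x0 x1 *m O *m adjmx (diag2 x0 x1) + antidiag2 y0 y1 *m O *m adjmx (antidiag2 y0 y1)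
  = zcov_map (x0 * x0) (x1 * x1) (y0 * y0) (y1 * y1) (x0 * x1) (y0 * y1) O.
Proof.
rewrite adjmx_diag2 adjmx_antidiag2; apply/matrixP => i j.
rewrite !mxE !big_ord_recl !big_ord0 !mxE !big_ord_recl !big_ord0 !mxE.
have E0 : ord0 = 0 :> 'I_2 by apply/val_inj.
have E1 : lift ord0 ord0 = 1 :> 'I_2 by apply/val_inj.
rewrite !E0 !E1.
by case: i => [[|[|i]] ?]; case: j => [[|[|j]] ?] //=; rewrite !rmorphM /=; ring.
Qed.

Lemma zcov_map_comp (p0 p1 q0 q1 r s p0' p1' q0' q1' r' s' : R) (O : 'M[R[i]]_2) :
  zcov_map p0 p1 q0 q1 r s (zcov_map p0' p1' q0' q1' r' s' O) =
  zcov_map (p0 * p0' + q0 * q1') (p1 * p1' + q1 * q0') (p0 * q0' + q0 * p1')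
           (p1 * q1' + q1 * p0') (r * r' + s * s') (r * s' + s * r') O.
Proof.
apply/matrixP => i j; rewrite !mxE.
case: i => [[|[|i]] ?]; case: j => [[|[|j]] ?] //=.
all: rewrite !rmorphD !rmorphM; ring.
Qed.

Lemma zcov_map_tr (p0 p1 q0 q1 r s : R) :
  p0 + q1 = 1 -> p1 + q0 = 1 -> trace_preserving (zcov_map p0 p1 q0 q1 r s).
Proof.
move=> tr0 tr1 A; rewrite /mxtrace !big_ord_recl !big_ord0 !mxE /=.
have E0 : ord0 = 0 :> 'I_2 by apply/val_inj.
have E1 : lift ord0 ord0 = 1 :> 'I_2 by apply/val_inj.
have -> : p0 = 1 - q1 by rewrite -tr0 addrK.
have -> : p1 = 1 - q0 by rewrite -tr1 addrK.
rewrite !E0 !E1 !rmorphB rmorph1 /=; ring.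
Qed.

End DiagAntidiagKraus.

Lemma mul_sqrtr_sqr (R : rcfType) (x y k l : R) :
  0 <= x -> 0 <= k -> x * y = k ^+ 2 * l -> Num.sqrt x * Num.sqrt y = k * Num.sqrt l.
Proof.
move=> x0 k0 xy; rewrite -sqrtrM // xy sqrtrM ?sqr_ge0 // sqrtr_sqr ger0_norm //.
Qed.

Lemma onepm_neq0 (R : realFieldType) (x : R) : 0 <= x -> x < 1 -> (1 + x != 0) && (1 - x != 0).
Proof. by move=> x_ge0 x_lt1; rewrite !gt_eqF //; lra. Qed.

Section ChannelFamily.
Variable R : realType.

(* [nwij b c] is the squared (i, j) entry of the Kraus operator of N_{b,c} supported
   there; [ncoh b c] is the factor by which N_{b,c} damps the off-diagonal entries,
   up to the weights (1 +- c) / 2. *)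
Definition nw00 (b c : R) := (1 + b) * (1 + c) / (2 * (1 + b * c)).
Definition nw11 (b c : R) := (1 - b) * (1 + c) / (2 * (1 - b * c)).
Definition nw01 (b c : R) := (1 + b) * (1 - c) / (2 * (1 - b * c)).
Definition nw10 (b c : R) := (1 - b) * (1 - c) / (2 * (1 + b * c)).
Definition ncoh (b c : R) := Num.sqrt ((1 - b) * (1 + b) / ((1 - b * c) * (1 + b * c))).

Lemma Nch_zcov (b c : R) (O : 'M[R[i]]_2) :
  0 <= b -> b <= 1 -> 0 <= c -> c <= 1 -> b * c < 1 ->
  Nch b c O = zcov_map (nw00 b c) (nw11 b c) (nw01 b c) (nw10 b c)
                       ((1 + c) / 2 * ncoh b c) ((1 - c) / 2 * ncoh b c) O.
Proof.
move=> b_ge0 b_le1 c_ge0 c_le1 bc_lt1; have bc_ge0 := mulr_ge0 b_ge0 c_ge0.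
have /andP[Dbc_neq0 Bbc_neq0] := onepm_neq0 bc_ge0 bc_lt1.
have [nw00_ge0 nw11_ge0 nw01_ge0 nw10_ge0] :
    [/\ 0 <= nw00 b c, 0 <= nw11 b c, 0 <= nw01 b c & 0 <= nw10 b c].
  by split; apply: divr_ge0; apply: mulr_ge0; lra.
rewrite /Nch; have -> : K0 b c = diag2 (Num.sqrt (nw00 b c)) (Num.sqrt (nw11 b c)) by [].
have -> : K1 b c = antidiag2 (Num.sqrt (nw01 b c)) (Num.sqrt (nw10 b c)) by [].
rewrite diag_antidiag_krausE -!expr2 !sqr_sqrtr //; congr zcov_map.
- apply: mul_sqrtr_sqr => //; first lra.
  by rewrite /nw00 /nw11; field; rewrite ?Dbc_neq0 ?Bbc_neq0.
- apply: mul_sqrtr_sqr => //; first lra.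
  by rewrite /nw01 /nw10; field; rewrite ?Dbc_neq0 ?Bbc_neq0.
Qed.

Lemma Nch_channel (b c : R) :
  0 <= b -> b <= 1 -> 0 <= c -> c <= 1 -> b * c < 1 -> qubit_channel (Nch b c).
Proof.
move=> b_ge0 b_le1 c_ge0 c_le1 bc_lt1; have bc_ge0 := mulr_ge0 b_ge0 c_ge0.
have /andP[Dbc_neq0 Bbc_neq0] := onepm_neq0 bc_ge0 bc_lt1.
split; first exact: linear_add (linear_conjmx _) (linear_conjmx _).
  exact: cp_add (cp_conjmx _) (cp_conjmx _).
move=> A; rewrite Nch_zcov //; apply: zcov_map_tr.
  by rewrite /nw00 /nw10; field; rewrite Dbc_neq0.
by rewrite /nw11 /nw01; field; rewrite Bbc_neq0.
Qed.

Lemma ncoh_mul (b c g : R) :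
  0 <= b -> b <= 1 -> 0 <= c -> 0 <= g -> g <= 1 -> b * c < 1 ->
  ncoh b c * ncoh (b * c) g = ncoh b (c * g).
Proof.
move=> b_ge0 b_le1 c_ge0 g_ge0 g_le1 bc_lt1; have bc_ge0 := mulr_ge0 b_ge0 c_ge0.
have bcg_ge0 := mulr_ge0 bc_ge0 g_ge0.
have bcg_lt1 : b * c * g < 1 by apply: le_lt_trans bc_lt1; rewrite ler_piMr.
have /andP[Dbc_neq0 Bbc_neq0] := onepm_neq0 bc_ge0 bc_lt1.
have /andP[Dbcg_neq0 Bbcg_neq0] := onepm_neq0 bcg_ge0 bcg_lt1.
rewrite /ncoh -sqrtrM; last by apply: divr_ge0; apply: mulr_ge0; lra.
by congr Num.sqrt; rewrite mulrA; field; rewrite Dbc_neq0 Bbc_neq0 Dbcg_neq0 Bbcg_neq0.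
Qed.

Lemma Nch_comp (b c g : R) (O : 'M[R[i]]_2) :
  0 <= b -> b <= 1 -> 0 <= c -> c <= 1 -> 0 <= g -> g <= 1 -> b * c < 1 ->
  Nch b (c * g) O = Nch b c (Nch (b * c) g O).
Proof.
move=> b_ge0 b_le1 c_ge0 c_le1 g_ge0 g_le1 bc_lt1; have bc_ge0 := mulr_ge0 b_ge0 c_ge0.
have bcg_ge0 := mulr_ge0 bc_ge0 g_ge0.
have bcg_lt1 : b * c * g < 1 by apply: le_lt_trans bc_lt1; rewrite ler_piMr.
have cg_ge0 := mulr_ge0 c_ge0 g_ge0.
have cg_le1 : c * g <= 1 by apply: le_trans c_le1; rewrite ler_piMr.
have /andP[Dbc_neq0 Bbc_neq0] := onepm_neq0 bc_ge0 bc_lt1.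
have /andP[Dbcg_neq0 Bbcg_neq0] := onepm_neq0 bcg_ge0 bcg_lt1.
have bc_le1 := ltW bc_lt1.
have b_cg_lt1 : b * (c * g) < 1 by rewrite mulrA.
rewrite !Nch_zcov // zcov_map_comp -ncoh_mul //; congr zcov_map.
all: rewrite /nw00 /nw11 /nw01 /nw10 ?mulrA; field.
all: by rewrite ?Dbc_neq0 ?Bbc_neq0 ?Dbcg_neq0 ?Bbcg_neq0.
Qed.

End ChannelFamily.

(* Also for y = 0, where x = 0 and x / 0 = 0. *)
Lemma ratio_unit_interval (R : realFieldType) (x y : R) :
  0 <= x -> x <= y -> [/\ 0 <= x / y, x / y <= 1 & y * (x / y) = x].
Proof.
move=> x_ge0 x_le_y; have [y0 | y_neq0] := eqVneq y 0.
  have x0 : x = 0 by apply/le_anti; rewrite x_ge0 -y0 x_le_y.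
  by rewrite x0 y0 mul0r mulr0.
have y_gt0 : 0 < y by rewrite lt_def y_neq0 (le_trans x_ge0).
by rewrite divr_ge0 ?ler_pdivrMr ?mul1r ?(ltW y_gt0) // mulrC divfK.
Qed.

Theorem mainTheorem6 (R : realType) (b c c' : R) :
  0 <= b -> b <= 1 -> 0 <= c -> c <= 1 -> 0 <= c' -> c' <= c -> b * c != 1 ->
  exists M : 'M[R[i]]_2 -> 'M[R[i]]_2,
    qubit_channel M /\ (forall O : 'M[R[i]]_2, Nch b c' O = Nch b c (M O)).
Proof.
move=> b_ge0 b_le1 c_ge0 c_le1 c'_ge0 c'_le_c bc_neq1.
have bc_ge0 := mulr_ge0 b_ge0 c_ge0.
have bc_lt1 : b * c < 1 by rewrite lt_neqAle bc_neq1 mulr_ile1.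
have [g_ge0 g_le1 cgE] := ratio_unit_interval c'_ge0 c'_le_c.
exists (Nch (b * c) (c' / c)); split.
  apply: Nch_channel => //; first exact: ltW.
  by apply: le_lt_trans bc_lt1; rewrite ler_piMr.
by move=> O; rewrite -{1}cgE; apply: Nch_comp.
Qed.
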